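(* Let $P$ be a Poisson prime ideal of $A$. (1) If $P$ is proper then $\gamma(P)$ is dense. (2) If $t_i=1$ for some $i$, then in $\gamma(P)$ one has $\delta_i=1$ and, in $V_{\gamma(P)}$, $v_i=s_i$.
   Context: Let $n\ge 3$, $A=\mathbb{C}[x_1,\dots,x_n]$. Fix $s_1,t_1,\dots,s_{n-2},t_{n-2}\in A$ with each $t_i\ne 0$ and $s_i,t_i$ coprime, such that $s_1/t_1,\dots,s_{n-2}/t_{n-2}$ are algebraically independent over $\mathbb{C}$. $A$ carries the Poisson bracket $\{f,g\}=(t_1\cdots t_{n-2})^2\,\mathrm{Jac}(f,g,s_1/t_1,\dots,s_{n-2}/t_{n-2})$ ($\mathrm{Jac}$ = Jacobian determinant with respect to $x_1,\dots,x_n$). A Poisson prime ideal is a prime ideal $P$ with $\{P,A\}\subseteq P$; it is proper if not all $\{a,b\}$ ($a,b\in A$) lie in $P$. For $P$ a Poisson prime ideal, $\gamma(P)=((\gamma_1,\delta_1),\dots,(\gamma_{n-2},\delta_{n-2}))\in(\{0,1\}\times\{0,1\})^{n-2}$ is defined by $\gamma_i=0\iff s_i\in P$ and $\delta_i=0\iff t_i\in P$. A sequence $\gamma=((\gamma_1,\delta_1),\dots,(\gamma_{n-2},\delta_{n-2}))$ is dense if $(\gamma_i,\delta_i)\ne(0,0)$ for every $i$. For such $\gamma$, $V_\gamma=\{v_1,\dots,v_{n-2}\}$ where $v_i=s_i/t_i$ if $\delta_i=1$ and $v_i=t_i/s_i$ otherwise. *)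

(* The complex numbers are modelled as R[i] for
   an arbitrary R : realType (every realType is a model of the real numbers). *)
From HB Require Import structures.
From mathcomp Require Import all_boot all_order all_algebra.
From mathcomp Require Import fraction ring_quotient.
From mathcomp Require Import complex.
From mathcomp Require Import reals.
From mathcomp Require Import mpoly.

Set Implicit Arguments.
Unset Strict Implicit.
Unset Printing Implicit Defensive.

Import Order.TTheory GRing.Theory Num.Theory.
Local Open Scope ring_scope.

Notation "x %:F" := (@FracField.tofrac _ x) : ring_scope.

Section PoissonDefs.

Variable R : realType.
Local Notation C := (R[i]).
Variable n : nat.
Local Notation A := {mpoly C[n]}.
Local Notation F := {fraction A}.

Definition mdvd (d p : A) : Prop := exists q : A, p = d * q.
Definition mcoprime (p q : A) : Prop :=
  forall d : A, mdvd d p -> mdvd d q -> d \is a GRing.unit.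

Definition dfrac (p q : A) (j : 'I_n) : F :=
  ((mderiv j p * q - p * mderiv j q)%:F) / ((q ^+ 2)%:F).

Variables s t : 'I_(n - 2) -> A.

Definition jac_row (f g : A) (i : nat) (j : 'I_n) : F :=
  match i with
  | 0 => (mderiv j f)%:F
  | 1 => (mderiv j g)%:F
  | k.+2 => match @insub nat (fun k => k < n - 2)%N _ k with
            | Some k' => dfrac (s k') (t k') j
            | None => 0
            end
  end.

Definition jac_mx (f g : A) : 'M[F]_n :=
  \matrix_(i < n, j < n) jac_row f g i j.

(* h = {f, g} = (t_1 ... t_{n-2})^2 Jac(f, g, s_1/t_1, ..., s_{n-2}/t_{n-2}),
   the equality being taken in Frac(A). *)
Definition is_bracket (f g h : A) : Prop :=
  h%:F = ((\prod_(k < n - 2) t k) ^+ 2)%:F * \det (jac_mx f g).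

Definition alg_indep_fracs : Prop :=
  forall Q : {mpoly C[n - 2]},
    mmap (fun c : C => (c%:MP_[n])%:F) (fun k => (s k)%:F / (t k)%:F) Q = 0 ->
    Q = 0.

(* prime ideals of A (idealr_closed includes 1 \notin P) *)
Definition prime_ideal (P : {pred A}) : Prop :=
  idealr_closed P /\ prime_idealr_closed P.

Definition poisson_ideal (P : {pred A}) : Prop :=
  forall a b h : A, a \in P -> is_bracket a b h -> h \in P.

Definition poisson_prime (P : {pred A}) : Prop :=
  prime_ideal P /\ poisson_ideal P.

Definition proper_poisson (P : {pred A}) : Prop :=
  exists a b h : A, is_bracket a b h /\ h \notin P.

(* gamma(P)_i = (gamma_i, delta_i), with gamma_i = 0 <-> s_i \in P and
   delta_i = 0 <-> t_i \in P *)
Definition gam (P : {pred A}) (i : 'I_(n - 2)) : bool * bool :=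
  (s i \notin P, t i \notin P).

Definition dense (gm : 'I_(n - 2) -> bool * bool) : Prop :=
  forall i, gm i != (false, false).

Definition Vgam (gm : 'I_(n - 2) -> bool * bool) (i : 'I_(n - 2)) : F :=
  if (gm i).2 then (s i)%:F / (t i)%:F else (t i)%:F / (s i)%:F.

End PoissonDefs.

(* Clearing the denominator (t_k)^2 in each fraction row, the bracket {a, b}
   is the determinant of a polynomial matrix whose row for s_k/t_k is the
   Wronskian-like row (d s_k) t_k - s_k (d t_k).  If both s_k and t_k lie in
   the prime ideal P, that whole row lies in P, hence so does every bracket;
   so a proper Poisson prime contains no pair (s_k, t_k).  When t_k = 1, t_k
   is never in P because P is proper as an ideal. *)
From HB Require Import structures.
From mathcomp Require Import all_boot all_order all_algebra.
From mathcomp Require Import fraction ring_quotient complex reals mpoly.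
From mathcomp Require Import zify.

Set Implicit Arguments.
Unset Strict Implicit.
Unset Printing Implicit Defensive.

Import Order.TTheory GRing.Theory Num.Theory.
Local Open Scope ring_scope.

Section IdealDeterminant.
Variables (R : comNzRingType) (S : {pred R}).
Hypothesis idealS : idealr_closed S.

Lemma idealr_mem_combination (x y u v : R) :
  u \in S -> v \in S -> x * u + y * v \in S.
Proof.
case: idealS => S0 _ closedS uS vS.
by rewrite closedS // -[y * v]addr0 closedS.
Qed.

Lemma det_row_idealr m (M : 'M[R]_m) (i : 'I_m) :
  (forall j, M i j \in S) -> \det M \in S.
Proof.
case: idealS => S0 _ closedS rowS; rewrite (expand_det_row _ i).
apply: (big_ind (fun x => x \in S)) => // [x y xS yS|j _].
  by rewrite -[x]mul1r closedS.
by rewrite mulrC -[_ * _]addr0 closedS.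
Qed.

End IdealDeterminant.

Section ClearedJacobian.
Variables (R : realType) (n : nat).
Local Notation A := {mpoly R[i][n]}.
Variables s t : 'I_(n - 2) -> A.
Hypothesis t_neq0 : forall k, t k != 0.
Hypothesis n_ge2 : (2 <= n)%N.

Definition jac_denom (i : nat) : A :=
  match i with
  | k.+2 => if @insub nat (fun k => k < n - 2)%N _ k is Some k'
            then t k' ^+ 2 else 1
  | _ => 1
  end.

Definition jac_num_row (a b : A) (i : nat) (j : 'I_n) : A :=
  match i with
  | 0 => mderiv j a
  | 1 => mderiv j b
  | k.+2 => if @insub nat (fun k => k < n - 2)%N _ k is Some k'
            then mderiv j (s k') * t k' - s k' * mderiv j (t k')
            else 0
  end.

Definition jac_num_mx (a b : A) : 'M[A]_n :=
  \matrix_(i < n, j < n) jac_num_row a b i j.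

Lemma jac_num_rowE a b i j :
  (jac_num_row a b i j)%:F = (jac_denom i)%:F * jac_row s t a b i j.
Proof.
case: i => [|[|k]] /=; rewrite ?tofrac1 ?mul1r //.
case: (insub k) => [k'|] /=; last by rewrite tofrac0 mulr0.
by rewrite [RHS]mulrC /dfrac divfK // tofrac_eq0 expf_neq0.
Qed.

Lemma prod_jac_denom : \prod_(r < n) jac_denom r = (\prod_(k < n - 2) t k) ^+ 2.
Proof.
rewrite -prodrXl -(big_mkord xpredT jac_denom) (big_cat_nat _ (n := 2)) //=.
rewrite big_nat_recl // big_nat_recl // big_geq // /= !mul1r.
transitivity (\prod_(0 + 2 <= i < n) jac_denom i) => //.
rewrite big_addn big_mkord; apply: eq_bigr => k _ /=.
by rewrite addn2 /jac_denom (_ : insub _ = Some k) // -(valK k).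
Qed.

Lemma bracket_det_jac_num a b h : is_bracket s t a b h -> \det (jac_num_mx a b) = h.
Proof.
move=> hb; apply/eqP; rewrite -tofrac_eq -det_map_mx hb.
have -> : map_mx (@FracField.tofrac _) (jac_num_mx a b)
    = diag_mx (\row_(r < n) (jac_denom r)%:F) *m jac_mx s t a b.
  by apply/matrixP => i j; rewrite mul_diag_mx !mxE jac_num_rowE.
rewrite det_mulmx det_diag.
under eq_bigr => r _ do rewrite mxE.
by rewrite -rmorph_prod prod_jac_denom.
Qed.

Lemma bracket_mem_idealr (P : {pred A}) a b h k :
  idealr_closed P -> s k \in P -> t k \in P -> is_bracket s t a b h -> h \in P.
Proof.
move=> idealP sP tP /bracket_det_jac_num <-.
have row_lt : (k.+2 < n)%N by have := ltn_ord k; lia.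
apply: (det_row_idealr idealP (i := Ordinal row_lt)) => j.
rewrite mxE /= (_ : insub _ = Some k); last by rewrite -(valK k).
by rewrite (mulrC (s k)) -mulNr (idealr_mem_combination idealP).
Qed.

End ClearedJacobian.

Theorem lemma2p16 (R : realType) (n : nat) (hn : (3 <= n)%N)
    (s t : 'I_(n - 2) -> {mpoly R[i][n]})
    (ht : forall k, t k != 0)
    (hcop : forall k, mcoprime (s k) (t k))
    (hind : alg_indep_fracs s t)
    (P : {pred {mpoly R[i][n]}})
    (hP : poisson_prime s t P) :
  (proper_poisson s t P -> dense (gam s t P)) /\
  (forall k, t k = 1 ->
     (gam s t P k).2 = true /\ Vgam s t (gam s t P) k = (s k)%:F).
Proof.
have [[idealP _] _] := hP; have n_ge2 : (2 <= n)%N by lia.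
split=> [[a [b [h [hb hP']]]] k | k tk1].
  apply/eqP => -[/negbFE sP /negbFE tP].
  by rewrite (bracket_mem_idealr ht n_ge2 idealP sP tP hb) in hP'.
have t_notin : (gam s t P k).2 by rewrite /= tk1; case: idealP.
by split=> //; rewrite /Vgam t_notin tk1 tofrac1 divr1.
Qed.
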